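(* Let $H$ be a finite group and $G$ a finitely generated residually finite group. Let $\bar w$ be a finite system of equations belonging to $Sys(Fin)$. Then $\bar w$ is solvable over the wreath product $H\wr G$.
   Context: Let $\bar y=(y_1,y_2,\dots)$ (constants) and $\bar x=(x_1,x_2,\dots)$ (variables) be countable sets of symbols and $F=F(\bar y,\bar x)$ the free group on them. A system of equations is a tuple $\bar w\in F^r(y_1,\dots,y_k,x_1,\dots,x_n)$ for some $k,n,r$; by substitution it defines a map $G^k\times G^n\to G^r$ for any group $G$, and $\bar w=1$ means all $r$ coordinates equal $1$. The system $\bar w$ is solvable in a group $G$ if for every $\bar a\in G^k$ there is $\bar x\in G^n$ with $\bar w(\bar a,\bar x)=1$. It is solvable over a group $G$ if there is a group $L\ge G$ such that for every $\bar a\in G^k$ there is $\bar x\in L^n$ with $\bar w(\bar a,\bar x)=1$. $Sys(Fin)$ denotes the set of finite systems of equations that are solvable in every finite group. The wreath product $H\wr G$ is the semidirect product $H^G\rtimes G$ (with $H^G$ all functions $G\to H$, pointwise multiplication), with action $(g.f)(x)=f(xg)$ and multiplication $(f,g)(f',g')=(f\,(g.f'),gg')$. *)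

From Stdlib Require Import FunctionalExtensionality List.
From mathcomp Require Import all_boot.

Set Implicit Arguments.
Unset Strict Implicit.
Unset Printing Implicit Defensive.

Record Grp := {
  gcarrier :> Type;
  gmul : gcarrier -> gcarrier -> gcarrier;
  ginv : gcarrier -> gcarrier;
  gone : gcarrier;
  gmulA : forall x y z, gmul x (gmul y z) = gmul (gmul x y) z;
  gmul1l : forall x, gmul gone x = x;
  gmul1r : forall x, gmul x gone = x;
  gmulVl : forall x, gmul (ginv x) x = gone;
  gmulVr : forall x, gmul x (ginv x) = gone
}.
Arguments gmul {g}. Arguments ginv {g}. Arguments gone {g}.

Definition finite_grp (G : Grp) : Prop := exists l : list G, forall g : G, In g l.

Definition is_hom (G K : Grp) (f : G -> K) : Prop :=
  forall x y : G, f (gmul x y) = gmul (f x) (f y).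

(** * Elements of the free group F(y_1..y_k, x_1..x_n), as group words. Evaluation in any
   group factors through the free group, so words represent elements of F. *)
Inductive word (Y X : Type) : Type :=
  | WConst : Y -> word Y X
  | WVar : X -> word Y X
  | WOne : word Y X
  | WMul : word Y X -> word Y X -> word Y X
  | WInv : word Y X -> word Y X.
Arguments WOne {Y X}.

Fixpoint weval (Y X : Type) (G : Grp) (a : Y -> G) (x : X -> G) (w : word Y X) : G :=
  match w with
  | WConst y => a y
  | WVar v => x v
  | WOne => gone
  | WMul u v => gmul (weval a x u) (weval a x v)
  | WInv u => ginv (weval a x u)
  end.

Definition system (k n : nat) := list (word 'I_k 'I_n).

Definition sys_holds (k n : nat) (G : Grp) (w : system k n)
    (a : 'I_k -> G) (x : 'I_n -> G) : Prop :=
  forall u, In u w -> weval a x u = gone.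

Definition solvable_in (k n : nat) (w : system k n) (G : Grp) : Prop :=
  forall a : 'I_k -> G, exists x : 'I_n -> G, sys_holds w a x.

Definition solvable_over (k n : nat) (w : system k n) (G : Grp) : Prop :=
  exists (L : Grp) (iota : G -> L),
    is_hom iota /\ (forall g h, iota g = iota h -> g = h) /\
    forall a : 'I_k -> G, exists x : 'I_n -> L, sys_holds w (fun i => iota (a i)) x.

Definition in_SysFin (k n : nat) (w : system k n) : Prop :=
  forall G : Grp, finite_grp G -> solvable_in w G.

Definition finitely_generated (G : Grp) : Prop :=
  exists (m : nat) (s : 'I_m -> G),
    forall g : G, exists u : word 'I_m False, weval s (fun v : False => match v with end) u = g.

Definition residually_finite (G : Grp) : Prop :=
  forall g : G, g <> gone ->
    exists (Q : Grp) (phi : G -> Q), finite_grp Q /\ is_hom phi /\ phi g <> gone.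

(** * Unrestricted wreath product H wr G = H^G ⋊ G,
   (g.f)(x) = f(x g), (f,g)(f',g') = (f (g.f'), g g'). *)
Definition wr_mul (H G : Grp) (p q : (G -> H) * G) : (G -> H) * G :=
  (fun x => gmul (p.1 x) (q.1 (gmul x p.2)), gmul p.2 q.2).
Definition wr_inv (H G : Grp) (p : (G -> H) * G) : (G -> H) * G :=
  (fun x => ginv (p.1 (gmul x (ginv p.2))), ginv p.2).
Definition wr_one (H G : Grp) : (G -> H) * G := (fun _ => gone, gone).

Lemma wr_mulA (H G : Grp) (p q r : (G -> H) * G) :
  wr_mul p (wr_mul q r) = wr_mul (wr_mul p q) r.
Proof.
case: p q r => [f1 g1] [f2 g2] [f3 g3]; rewrite /wr_mul /=.
f_equal; last by rewrite gmulA.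
apply: functional_extensionality => x; by rewrite !gmulA.
Qed.

Lemma wr_mul1l (H G : Grp) (p : (G -> H) * G) : wr_mul (wr_one H G) p = p.
Proof.
case: p => f g; rewrite /wr_mul /wr_one /=; f_equal; last by rewrite gmul1l.
apply: functional_extensionality => x; by rewrite gmul1l gmul1r.
Qed.

Lemma wr_mul1r (H G : Grp) (p : (G -> H) * G) : wr_mul p (wr_one H G) = p.
Proof.
case: p => f g; rewrite /wr_mul /wr_one /=; f_equal; last by rewrite gmul1r.
apply: functional_extensionality => x; by rewrite gmul1r.
Qed.

Lemma wr_mulVl (H G : Grp) (p : (G -> H) * G) : wr_mul (wr_inv p) p = wr_one H G.
Proof.
case: p => f g; rewrite /wr_mul /wr_inv /wr_one /=; f_equal; last by rewrite gmulVl.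
apply: functional_extensionality => x; by rewrite gmulVl.
Qed.

Lemma wr_mulVr (H G : Grp) (p : (G -> H) * G) : wr_mul p (wr_inv p) = wr_one H G.
Proof.
case: p => f g; rewrite /wr_mul /wr_inv /wr_one /=; f_equal; last by rewrite gmulVr.
apply: functional_extensionality => x; by rewrite -gmulA gmulVr gmul1r gmulVr.
Qed.

Definition wreath (H G : Grp) : Grp :=
  {| gcarrier := (G -> H) * G;
     gmul := @wr_mul H G; ginv := @wr_inv H G; gone := wr_one H G;
     gmulA := @wr_mulA H G; gmul1l := @wr_mul1l H G; gmul1r := @wr_mul1r H G;
     gmulVl := @wr_mulVl H G; gmulVr := @wr_mulVr H G |}.

(* G is countable, being finitely generated, so residual finiteness embeds it into a
   countable product K = prod_i Q_i of finite groups; extending functions by 1 embeds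
   H wr G into H wr K.  Let P_m = Q_0 x ... x Q_(m-1).  Call Y in P_m^n good if, whatever
   the H-parts D_i : P_m -> H of the constants, w has a solution in H wr P_m whose
   P_m-part is Y.  Solving w in one finite permutational wreath product of H by P_L, acting
   on copies of every P_m (m <= L) labelled by all possible D, gives y good at all levels
   m <= L; compactness of K^n then gives y in K^n good at every level, so the K-parts of
   the equations vanish.  The H-part at a point z only reads the H-parts at finitely many
   points of z U, where U is the countable subgroup generated by G and y; finitely many
   points are separated by some P_M, where a solution in H wr P_M pulls back to values
   satisfying the equations at these points.  A second compactness argument, over an
   enumeration of U, yields values satisfying all equations; off U all values are 1. *)

From Stdlib Require Import List FunctionalExtensionality ClassicalEpsilon.
From mathcomp Require Import all_boot.
(* Imported last so that [Finite] is Stdlib's predicate, not mathcomp's structure. *)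
From Stdlib Require Import FinFun.

Set Implicit Arguments.
Unset Strict Implicit.
Unset Printing Implicit Defensive.

Section GroupFacts.
Variable G : Grp.
Implicit Types x y : G.

Lemma gmulK x y : gmul (gmul x y) (ginv y) = x.
Proof. by rewrite -gmulA gmulVr gmul1r. Qed.

Lemma gmulVK x y : gmul (gmul x (ginv y)) y = x.
Proof. by rewrite -gmulA gmulVl gmul1r. Qed.

Lemma ginv_uniq x y : gmul x y = gone -> y = ginv x.
Proof. by move=> e; rewrite -[y]gmul1l -(gmulVl x) -gmulA e gmul1r. Qed.

Lemma ginv1 : ginv (gone : G) = gone.
Proof. by symmetry; apply: ginv_uniq; rewrite gmul1l. Qed.

Lemma gmul_eq1 x y : gmul x (ginv y) = gone -> x = y.
Proof. by move=> e; rewrite -(gmulVK x y) e gmul1l. Qed.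
End GroupFacts.

Section Homomorphisms.
Variables (G K : Grp) (h : G -> K).
Hypothesis h_hom : is_hom h.

Lemma hom1 : h gone = gone.
Proof.
have idem : gmul (h gone) (h gone) = h gone by rewrite -h_hom gmul1l.
by rewrite -{1}(gmulK (h gone) (h gone)) idem gmulVr.
Qed.

Lemma homV x : h (ginv x) = ginv (h x).
Proof. by apply: ginv_uniq; rewrite -h_hom gmulVr hom1. Qed.

Lemma weval_hom (Y X : Type) (a : Y -> G) (x : X -> G) (u : word Y X) :
  weval (fun i => h (a i)) (fun j => h (x j)) u = h (weval a x u).
Proof. by elim: u => //= [|u -> v ->|u ->]; rewrite ?hom1 ?h_hom ?homV. Qed.

Lemma sys_holds_hom k n (w : system k n) (a : 'I_k -> G) (x : 'I_n -> G)
    (a' : 'I_k -> K) (x' : 'I_n -> K) :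
  (forall i, a' i = h (a i)) -> (forall j, x' j = h (x j)) ->
  sys_holds w a x -> sys_holds w a' x'.
Proof.
move=> /functional_extensionality -> /functional_extensionality -> sol u wu.
by rewrite weval_hom sol // hom1.
Qed.
End Homomorphisms.

Lemma Finite_ord m : Finite 'I_m.
Proof.
exists (enum 'I_m) => i; have : i \in enum 'I_m by rewrite mem_enum.
elim: (enum 'I_m) => //= j s IHs.
by rewrite in_cons => /orP [/eqP ->|/IHs]; [left|right].
Qed.

Lemma Finite_prod (A B : Type) : Finite A -> Finite B -> Finite (A * B).
Proof. by move=> [la Ha] [lb Hb]; exists (list_prod la lb) => -[a b]; apply: in_prod. Qed.

Lemma Finite_family (A : Type) (B : A -> Type) :
  (forall a, Finite (B a)) -> exists lB : forall a, list (B a), forall a b, In b (lB a).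
Proof.
move=> finB; exists (fun a => proj1_sig (constructive_indefinite_description _ (finB a))).
by move=> a; apply: (proj2_sig (constructive_indefinite_description _ (finB a))).
Qed.

Lemma Finite_sigma (A : Type) (B : A -> Type) :
  Finite A -> (forall a, Finite (B a)) -> Finite {a : A & B a}.
Proof.
move=> [la Ha] /Finite_family [lB HB].
exists (flat_map (fun a => map (existT B a) (lB a)) la) => -[a b].
by apply/in_flat_map; exists a; split; last exact: in_map.
Qed.

Lemma Finite_dfun (A : Type) (B : A -> Type) :
  Finite A -> (forall a, Finite (B a)) -> Finite (forall a, B a).
Proof.
move=> [la Ha] /Finite_family [lB HB].
suff [L HL] : exists L : list (forall a, B a),
    forall f, exists2 f', In f' L & forall a, In a la -> f' a = f a.
  exists L => f; have [f' Lf' ef'] := HL f.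
  by have -> : f = f' by apply: functional_extensionality_dep => a; rewrite ef'.
elim: la {Ha} => [|a la [L HL]].
  case: (classic (inhabited (forall a, B a))) => [[f0]|empty].
    by exists [:: f0] => f; exists f0 => //; left.
  by exists [::] => f; case: empty.
pose upd (f : forall a, B a) (b : B a) : forall x, B x := fun x =>
  if excluded_middle_informative (x = a) is left e then eq_rect_r B b e else f x.
exists (flat_map (fun f' => map (upd f') (lB a)) L) => f.
have [f' Lf' ef'] := HL f; exists (upd f' (f a)).
  by apply/in_flat_map; exists f'; split; last exact: in_map.
move=> x x_in; rewrite /upd; case: excluded_middle_informative => [e|ne]; first by subst x.
by apply: ef'; case: x_in => // e; case: ne.
Qed.

Lemma Finite_fun (A B : Type) : Finite A -> Finite B -> Finite (A -> B).
Proof. by move=> finA finB; apply: Finite_dfun. Qed.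

Lemma bounded_witnesses (A : Type) (l : list A) (P : A -> nat -> Prop) :
  (forall a, In a l -> exists N, P a N) ->
  exists N, forall a, In a l -> exists2 M, M <= N & P a M.
Proof.
elim: l => [|a l IHl] wit; first by exists 0.
have [N HN] := IHl (fun b lb => wit b (or_intror lb)).
have [Na PNa] := wit a (or_introl erefl).
exists (maxn Na N) => b [<-|lb]; first by exists Na; rewrite ?leq_maxl.
by have [M le PM] := HN b lb; exists M; rewrite // leq_max le orbT.
Qed.

Definition enumerable (T : Type) : Prop :=
  exists e : nat -> option T, forall t, exists N, e N = Some t.

Lemma enumerable_ord m : enumerable 'I_m.
Proof. by exists insub => i; exists i; rewrite valK. Qed.

Lemma enumerable_False : enumerable False.
Proof. by exists (fun _ => None). Qed.

Lemma enumerable_surj (A B : Type) (f : A -> B) :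
  enumerable A -> (forall b, exists a, f a = b) -> enumerable B.
Proof.
move=> [e e_surj] f_surj; exists (fun N => omap f (e N)) => b.
by have [a <-] := f_surj b; have [N eN] := e_surj a; exists N; rewrite eN.
Qed.

Section WordEnumeration.
Variables (Y X : Type) (eY : nat -> option Y) (eX : nat -> option X).

Fixpoint decode_word (t : GenTree.tree nat) : option (word Y X) :=
  match t with
  | GenTree.Node 0 [:: GenTree.Leaf a] => omap (@WConst Y X) (eY a)
  | GenTree.Node 1 [:: GenTree.Leaf a] => omap (@WVar Y X) (eX a)
  | GenTree.Node 2 [::] => Some WOne
  | GenTree.Node 3 [:: t1; t2] =>
      if (decode_word t1, decode_word t2) is (Some u, Some v) then Some (WMul u v) else None
  | GenTree.Node 4 [:: t1] => omap (@WInv Y X) (decode_word t1)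
  | _ => None
  end.

Hypotheses (eY_surj : forall a, exists N, eY N = Some a).
Hypotheses (eX_surj : forall a, exists N, eX N = Some a).

Lemma decode_word_surj u : exists t, decode_word t = Some u.
Proof.
elim: u => [a|a||u [t1 e1] v [t2 e2]|u [t1 e1]].
- by have [N eN] := eY_surj a; exists (GenTree.Node 0 [:: GenTree.Leaf N]); rewrite /= eN.
- by have [N eN] := eX_surj a; exists (GenTree.Node 1 [:: GenTree.Leaf N]); rewrite /= eN.
- by exists (GenTree.Node 2 [::]).
- by exists (GenTree.Node 3 [:: t1; t2]); rewrite /= e1 e2.
- by exists (GenTree.Node 4 [:: t1]); rewrite /= e1.
Qed.
End WordEnumeration.

Lemma enumerable_word (Y X : Type) : enumerable Y -> enumerable X -> enumerable (word Y X).
Proof.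
move=> [eY eY_surj] [eX eX_surj].
exists (fun N => obind (decode_word eY eX) (unpickle N)) => u.
have [t et] := decode_word_surj eY_surj eX_surj u.
by exists (pickle t); rewrite pickleK.
Qed.

Lemma enumerable_fg (G : Grp) : finitely_generated G -> enumerable G.
Proof.
move=> [m [s s_gen]]; apply: enumerable_surj s_gen.
exact: enumerable_word (enumerable_ord m) enumerable_False.
Qed.
Section Compactness.
Variables (V : nat -> Type) (R : nat -> (forall i, V i) -> Prop).
Hypothesis V_fin : forall i, Finite (V i).
Hypothesis R_local : forall L f g, (forall i, i < L -> f i = g i) -> R L f -> R L g.
Hypothesis R_mono : forall L f, R L.+1 f -> R L f.
Hypothesis R_sat : forall L, exists f, R L f.

Definition agree L (f g : forall i, V i) := forall i, i < L -> f i = g i.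

(* The nodes of König's tree that have descendants at every depth. *)
Definition extendable L f := forall d, exists2 g, agree L f g & R (L + d) g.

Lemma R_mono_le M L f : M <= L -> R L f -> R M f.
Proof.
move/subnK <-; elim: (L - M) => [//|d IHd] Rf.
by apply: IHd; apply: R_mono; rewrite -addSn.
Qed.

(* If every value at coordinate [L] dies out at some depth, the finitely many
   values die out at a common depth, contradicting extendability. *)
Lemma extendable_step L f :
  extendable L f -> exists2 f', agree L f f' & extendable L.+1 f'.
Proof.
move=> f_ext; apply: NNPP => stuck.
have dies v : exists d, forall g, agree L f g -> g L = v -> ~ R (L.+1 + d) g.
  case: (classic (exists2 g0, agree L f g0 & g0 L = v)) => [[g0 fg0 g0v]|no_g0]; last first.
    by exists 0 => g fg gv _; apply: no_g0; exists g.
  have /not_all_ex_not [d no_ext] : ~ extendable L.+1 g0 by move=> e; apply: stuck; exists g0.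
  exists d => g fg gv Rg; apply: no_ext; exists g => // i; rewrite ltnS leq_eqVlt.
  by case/orP => [/eqP ->|ltiL]; [rewrite g0v gv | rewrite -fg0 ?fg].
have [lv lvP] := V_fin L.
have [D HD] := bounded_witnesses (l := lv) (fun v _ => dies v).
have [g fg RgD] := f_ext D.+1.
have [d le_dD dead] := HD (g L) (lvP (g L)).
by apply: (dead g fg erefl); apply: R_mono_le RgD; rewrite addSnnS leq_add2l.
Qed.

Definition next L f : forall i, V i :=
  if excluded_middle_informative (exists f', agree L f f' /\ extendable L.+1 f') is left h
  then proj1_sig (constructive_indefinite_description _ h) else f.

Lemma nextP L f : extendable L f -> agree L f (next L f) /\ extendable L.+1 (next L f).
Proof.
move=> /extendable_step [f' ff' f'_ext]; rewrite /next.
case: excluded_middle_informative => [h|[]]; last by exists f'.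
exact: proj2_sig (constructive_indefinite_description _ h).
Qed.

Fixpoint approx (f0 : forall i, V i) L : forall i, V i :=
  if L is L'.+1 then next L' (approx f0 L') else f0.

Theorem countable_compactness : exists f, forall L, R L f.
Proof.
have [f0 _] := R_sat 0.
have approx_ext L : extendable L (approx f0 L).
  elim: L => [|L IHL] /=; last exact: (nextP IHL).2.
  by move=> d; have [g Rg] := R_sat d; exists g.
have approx_agree i L : i < L -> approx f0 L i = approx f0 i.+1 i.
  elim: L => [//|L IHL]; rewrite ltnS leq_eqVlt => /orP [/eqP -> //|ltiL].
  by rewrite -IHL //= -(nextP (approx_ext L)).1.
exists (fun i => approx f0 i.+1 i) => L.
have [g agr Rg] := approx_ext L 0; rewrite addn0 in Rg.
by apply: R_local Rg => i ltiL; rewrite -agr // approx_agree.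
Qed.
End Compactness.

Definition unit_grp : Grp.
Proof.
by refine {| gcarrier := unit; gmul := fun _ _ => tt; ginv := fun _ => tt; gone := tt |};
  do ?case.
Defined.

Definition prodG (I : Type) (Q : I -> Grp) : Grp.
Proof.
refine {| gcarrier := forall i, Q i;
          gmul := fun p q i => gmul (p i) (q i);
          ginv := fun p i => ginv (p i);
          gone := fun i => gone |}.
- by move=> x y z; apply: functional_extensionality_dep => i; rewrite gmulA.
- by move=> x; apply: functional_extensionality_dep => i; rewrite gmul1l.
- by move=> x; apply: functional_extensionality_dep => i; rewrite gmul1r.
- by move=> x; apply: functional_extensionality_dep => i; rewrite gmulVl.
- by move=> x; apply: functional_extensionality_dep => i; rewrite gmulVr.
Defined.

Section PermutationalWreath.
Variables (H P : Grp) (O : Type) (act : O -> P -> O).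
Hypothesis act1 : forall o, act o gone = o.
Hypothesis actM : forall o p q, act (act o p) q = act o (gmul p q).

(* The permutational wreath product of [H] by [P] acting on [O]; [wreath H P] is the case
   of the right regular action. *)
Definition pwr : Grp.
Proof.
refine {| gcarrier := ((O -> H) * P)%type;
          gmul := fun x y => (fun o => gmul (x.1 o) (y.1 (act o x.2)), gmul x.2 y.2);
          ginv := fun x => (fun o => ginv (x.1 (act o (ginv x.2))), ginv x.2);
          gone := (fun _ => gone, gone) |}.
- move=> [f1 g1] [f2 g2] [f3 g3] /=; congr pair; last by rewrite gmulA.
  by apply: functional_extensionality => o; rewrite actM !gmulA.
- move=> [f g] /=; congr pair; last by rewrite gmul1l.
  by apply: functional_extensionality => o; rewrite gmul1l act1.
- move=> [f g] /=; congr pair; last by rewrite gmul1r.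
  by apply: functional_extensionality => o; rewrite gmul1r.
- move=> [f g] /=; congr pair; last by rewrite gmulVl.
  by apply: functional_extensionality => o; rewrite gmulVl.
- move=> [f g] /=; congr pair; last by rewrite gmulVr.
  by apply: functional_extensionality => o; rewrite actM gmulVr act1 gmulVr.
Defined.

Lemma pwr_to_wreath_hom (P' : Grp) (pi : P -> P') (e : P' -> O) :
  is_hom pi -> (forall q p, e (gmul q (pi p)) = act (e q) p) ->
  is_hom (fun x : pwr => ((fun q => x.1 (e q)), pi x.2) : wreath H P').
Proof.
move=> pi_hom e_equiv [f p] [f' p'] /=; rewrite /wr_mul /= pi_hom; congr pair.
by apply: functional_extensionality => q; rewrite e_equiv.
Qed.
End PermutationalWreath.

Section WreathEmbedding.
Variables (H G K : Grp) (psi : G -> K).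
Hypotheses (psi_hom : is_hom psi) (psi_inj : injective psi).

Definition extend_by_one (f : G -> H) (z : K) : H :=
  if excluded_middle_informative (exists g, psi g = z) is left h
  then f (proj1_sig (constructive_indefinite_description _ h)) else gone.

Lemma extend_by_one_out f z : ~ (exists g, psi g = z) -> extend_by_one f z = gone.
Proof. by rewrite /extend_by_one; case: excluded_middle_informative. Qed.

Lemma extend_by_oneE f g : extend_by_one f (psi g) = f g.
Proof.
rewrite /extend_by_one; case: excluded_middle_informative => [h|[]]; last by exists g.
by rewrite (psi_inj (proj2_sig (constructive_indefinite_description _ h))).
Qed.

Definition wr_embed (x : wreath H G) : wreath H K := (extend_by_one x.1, psi x.2).

Lemma wr_embed_hom : is_hom wr_embed.
Proof.
move=> [f g] [f' g']; rewrite /wr_embed /= /wr_mul /= psi_hom; congr pair.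
apply: functional_extensionality => z.
case: (classic (exists x, psi x = z)) => [[x <-]|outside].
  by rewrite -psi_hom !extend_by_oneE.
rewrite !extend_by_one_out ?gmul1l // => -[x psi_x]; apply: outside.
by exists (gmul x (ginv g)); rewrite psi_hom (homV psi_hom) psi_x gmulK.
Qed.

Lemma wr_embed_inj : injective wr_embed.
Proof.
move=> [f g] [f' g'] [ef /psi_inj eg]; congr pair => //.
by apply: functional_extensionality => x; rewrite -(extend_by_oneE f) ef extend_by_oneE.
Qed.
End WreathEmbedding.

Lemma residually_finite_embedding (G : Grp) :
  enumerable G -> residually_finite G ->
  exists (Q : nat -> Grp) (psi : G -> prodG Q),
    [/\ forall i, Finite (Q i), is_hom psi & injective psi].
Proof.
move=> [e e_surj] rf.
have quotient g : exists Qphi : {Q : Grp & G -> Q},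
    [/\ Finite (projT1 Qphi), is_hom (projT2 Qphi) & g <> gone -> projT2 Qphi g <> gone].
  case: (classic (g = gone)) => [->|g1].
    exists (existT (fun Q : Grp => G -> Q) unit_grp (fun _ => tt)).
    by split => //; exists [:: tt] => -[]; left.
  have [Q [phi [finQ [phi_hom phi_g]]]] := rf g g1.
  by exists (existT (fun Q : Grp => G -> Q) Q phi).
pose Qphi N := proj1_sig (constructive_indefinite_description _ (quotient (odflt gone (e N)))).
have Qphi_spec N : [/\ Finite (projT1 (Qphi N)), is_hom (projT2 (Qphi N))
    & odflt gone (e N) <> gone -> projT2 (Qphi N) (odflt gone (e N)) <> gone].
  exact: proj2_sig (constructive_indefinite_description _ (quotient (odflt gone (e N)))).
exists (fun N => projT1 (Qphi N)), (fun g N => projT2 (Qphi N) g); split.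
- by move=> N; have [] := Qphi_spec N.
- move=> x y; apply: functional_extensionality_dep => N.
  by have [_ hom _] := Qphi_spec N; rewrite hom.
move=> g g' eq_psi; apply: gmul_eq1; apply: NNPP => ne.
have [N eN] := e_surj (gmul g (ginv g')); have [_ hom sep] := Qphi_spec N.
rewrite eN /= in sep; apply: sep => //.
by rewrite hom (homV hom) (f_equal (fun p => p N) eq_psi) gmulVr.
Qed.

Section WreathEvaluation.
Variables (H K : Grp) (k n : nat) (b : 'I_k -> K) (y : 'I_n -> K).

Fixpoint hpart (F : 'I_k -> K -> H) (Phi : 'I_n -> K -> H) (u : word 'I_k 'I_n) (z : K) : H :=
  match u with
  | WConst i => F i z
  | WVar j => Phi j z
  | WOne => gone
  | WMul u v => gmul (hpart F Phi u z) (hpart F Phi v (gmul z (weval b y u)))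
  | WInv u => ginv (hpart F Phi u (gmul z (ginv (weval b y u))))
  end.

Fixpoint touched (u : word 'I_k 'I_n) (z : K) : list K :=
  match u with
  | WConst _ | WVar _ => [:: z]
  | WOne => [::]
  | WMul u v => touched u z ++ touched v (gmul z (weval b y u))
  | WInv u => touched u (gmul z (ginv (weval b y u)))
  end.

Lemma weval_wreath F Phi u :
  @weval _ _ (wreath H K) (fun i => (F i, b i)) (fun j => (Phi j, y j)) u
  = (hpart F Phi u, weval b y u).
Proof. by elim: u => //= [u -> v ->|u ->]. Qed.

Lemma hpart_one u z : hpart (fun _ _ => gone) (fun _ _ => gone) u z = gone.
Proof. by elim: u z => //= [u IHu v IHv|u IHu] z; rewrite ?IHu ?IHv ?gmul1l ?ginv1. Qed.
End WreathEvaluation.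

Section HpartTransfer.
Variables (H K K' : Grp) (pi : K -> K') (k n : nat) (b : 'I_k -> K) (y : 'I_n -> K).
Hypothesis pi_hom : is_hom pi.

Lemma hpart_transfer (F : 'I_k -> K -> H) Phi F' Phi' u z :
  (forall p, In p (touched b y u z) ->
     (forall i, F' i (pi p) = F i p) /\ (forall j, Phi' j (pi p) = Phi j p)) ->
  hpart (fun i => pi (b i)) (fun j => pi (y j)) F' Phi' u (pi z) = hpart b y F Phi u z.
Proof.
elim: u z => /= [i|j||u IHu v IHv|u IHu] z agree.
- by rewrite (agree z (or_introl erefl)).1.
- by rewrite (agree z (or_introl erefl)).2.
- by [].
- rewrite weval_hom // -pi_hom IHu ?IHv // => p p_in;
    apply: agree; apply/in_or_app; by [right | left].
- by rewrite weval_hom // -(homV pi_hom) -pi_hom IHu.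
Qed.
End HpartTransfer.

Lemma hpart_local (H K : Grp) (k n : nat) (b : 'I_k -> K) (y : 'I_n -> K)
    (F F' : 'I_k -> K -> H) Phi Phi' u z :
  (forall p, In p (touched b y u z) ->
     (forall i, F' i p = F i p) /\ (forall j, Phi' j p = Phi j p)) ->
  hpart b y F' Phi' u z = hpart b y F Phi u z.
Proof. exact: (@hpart_transfer H K K id). Qed.

Section Levels.
Variable Q : nat -> Grp.
Local Notation K := (prodG Q).

Definition level (L : nat) : Grp := prodG (fun i : 'I_L => Q i).

Definition trunc L (z : K) : level L := fun i => z i.
Arguments trunc : clear implicits.

Lemma trunc_hom L : is_hom (trunc L).
Proof. by []. Qed.

Lemma trunc_inj (z z' : K) : (forall L, trunc L z = trunc L z') -> z = z'.
Proof.
move=> e; apply: functional_extensionality_dep => i.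
exact: (f_equal (fun p : level i.+1 => p ord_max) (e i.+1)).
Qed.

Definition lift L (p : level L) : K := fun i =>
  if (i < L) =P true is ReflectT lt_iL then p (Ordinal lt_iL) else gone.

Lemma trunc_lift L (p : level L) : trunc L (lift p) = p.
Proof.
apply: functional_extensionality_dep => -[i lt_iL]; rewrite /trunc /lift /=.
by case: eqP => [lt_iL'|//]; rewrite (bool_irrelevance lt_iL' lt_iL).
Qed.

Definition truncP L (m : 'I_L.+1) (p : level L) : level m :=
  fun i => p (widen_ord (ltn_ord m : m <= L) i).
Arguments truncP {L} m p.

Lemma truncP_hom L (m : 'I_L.+1) : is_hom (truncP m).
Proof. by []. Qed.

Definition separates M (Z : list K) :=
  forall p p', In p Z -> In p' Z -> trunc M p = trunc M p' -> p = p'.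

Lemma separating_level Z : exists M, separates M Z.
Proof.
have sep2 (pp : K * K) : exists M, trunc M pp.1 = trunc M pp.2 -> pp.1 = pp.2.
  case: (classic (pp.1 = pp.2)) => [e|ne]; first by exists 0.
  have /not_all_ex_not [M neM] : ~ forall M, trunc M pp.1 = trunc M pp.2.
    by move/trunc_inj.
  by exists M.
have [M HM] := bounded_witnesses (l := list_prod Z Z) (fun pp _ => sep2 pp).
exists M => p p' Zp Zp' eM; have [M' le_M'M] := HM (p, p') (in_prod _ _ _ _ Zp Zp').
apply; exact: (f_equal (fun q : level M => fun i : 'I_M' => q (widen_ord le_M'M i)) eM).
Qed.

Definition trunc_factor (X : Type) M (Z : list K) (F : K -> X) (q : level M) : X :=
  if excluded_middle_informative (exists p, In p Z /\ trunc M p = q) is left h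
  then F (proj1_sig (constructive_indefinite_description _ h)) else F gone.
Arguments trunc_factor {X} M Z F q.

Lemma trunc_factorE (X : Type) M Z (F : K -> X) p :
  separates M Z -> In p Z -> trunc_factor M Z F (trunc M p) = F p.
Proof.
move=> sepZ Zp; rewrite /trunc_factor; case: excluded_middle_informative => [h|[]].
  have [Zp' e] := proj2_sig (constructive_indefinite_description _ h).
  by rewrite (sepZ _ _ Zp' Zp e).
by exists p.
Qed.

Hypothesis Q_fin : forall i, Finite (Q i).

Lemma Finite_level L : Finite (level L).
Proof. by apply: Finite_dfun; [exact: Finite_ord | move=> i; exact: Q_fin]. Qed.

Variables (H : Grp) (k n : nat) (w : system k n) (b : 'I_k -> K).
Hypotheses (H_fin : Finite H) (w_fin : in_SysFin w).

Definition good m (Y : 'I_n -> level m) :=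
  forall D : 'I_k -> level m -> H, exists Phi : 'I_n -> level m -> H,
    @sys_holds k n (wreath H (level m)) w (fun i => (D i, trunc m (b i))) (fun j => (Phi j, Y j)).

Definition omega L := {m : 'I_L.+1 & (('I_k -> level m -> H) * level m)%type}.

Definition omega_act L (o : omega L) (p : level L) : omega L :=
  existT _ (projT1 o) ((projT2 o).1, gmul (projT2 o).2 (truncP (projT1 o) p)).

Lemma omega_act1 L (o : omega L) : omega_act o gone = o.
Proof. by case: o => m [D q]; congr existT; congr pair; exact: gmul1r. Qed.

Lemma omega_actM L (o : omega L) p p' : omega_act (omega_act o p) p' = omega_act o (gmul p p').
Proof. by case: o => m [D q]; congr existT; congr pair; rewrite -gmulA. Qed.

(* [level L] acts on copies of each [level m], [m <= L], labelled by all [H]-parts [D], so a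
   solution in this finite group maps to one in [H wr level m] for every such [m] and [D]. *)
Definition universal L : Grp := pwr H (@omega_act1 L) (@omega_actM L).

Lemma Finite_universal L : Finite (universal L).
Proof.
apply: Finite_prod (Finite_level L); apply: Finite_fun H_fin.
apply: Finite_sigma => [|m]; first exact: Finite_ord.
apply: Finite_prod (Finite_level m).
by apply: Finite_fun (Finite_ord k) _; apply: Finite_fun (Finite_level m) H_fin.
Qed.

Lemma good_up_to L : exists y : 'I_n -> K, forall m, m <= L -> good (fun j => trunc m (y j)).
Proof.
have [x sol] := w_fin (Finite_universal L)
  (fun i => (fun o => (projT2 o).1 i (projT2 o).2, trunc L (b i)) : universal L).
exists (fun j => lift (x j).2) => m le_mL D.
pose m' : 'I_L.+1 := Ordinal (le_mL : m < L.+1).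
exists (fun j q => (x j).1 (existT _ m' (D, q))).
have to_level_m := pwr_to_wreath_hom (H := H) (act1 := @omega_act1 L) (actM := @omega_actM L)
  (truncP_hom m') (e := fun q => existT _ m' (D, q)) (fun q p => erefl).
apply: (sys_holds_hom to_level_m _ _ sol) => //.
by move=> j; rewrite -[in RHS](trunc_lift (x j).2).
Qed.

Lemma good_everywhere : exists y : 'I_n -> K, forall m, good (fun j => trunc m (y j)).
Proof.
pose R L (f : forall i, 'I_n -> Q i) :=
  forall m, m <= L -> good (fun j => trunc m (fun i => f i j)).
have [f Rf] : exists f, forall L, R L f.
  apply: countable_compactness.
  - by move=> i; apply: Finite_fun (Finite_ord n) (Q_fin i).
  - move=> L f g agr Rf m le_mL.
    suff -> : (fun j => trunc m (fun i => g i j)) = (fun j => trunc m (fun i => f i j)).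
      exact: Rf.
    apply: functional_extensionality => j; apply: functional_extensionality_dep => i.
    by change (g i j = f i j); rewrite agr // (leq_trans (ltn_ord i) le_mL).
  - by move=> L f Rf m le_mL; apply: Rf (leqW le_mL).
  - by move=> L; have [y good_y] := good_up_to L; exists (fun i j => y j i).
by exists (fun j i => f i j) => m; apply: Rf.
Qed.

Section Limit.
Variable y : 'I_n -> K.
Hypothesis y_good : forall m, good (fun j => trunc m (y j)).

Lemma weval_good_eq1 u : In u w -> weval b y u = gone.
Proof.
move=> wu; apply: (@trunc_inj (weval b y u) gone) => m; rewrite -(weval_hom (trunc_hom m)).
have [Phi sol] := @y_good m (fun _ _ => gone).
by have := sol u wu; rewrite weval_wreath => -[_ ->].
Qed.

Variable pt : nat -> K.
Definition inU z := exists N, pt N = z.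
Hypotheses (U1 : inU gone) (UM : forall x x', inU x -> inU x' -> inU (gmul x x')).
Hypotheses (UV : forall x, inU x -> inU (ginv x)).
Hypotheses (Ub : forall i, inU (b i)) (Uy : forall j, inU (y j)).
Variable F : 'I_k -> K -> H.
Hypothesis F_out : forall i z, ~ inU z -> F i z = gone.

Lemma inU_weval u : inU (weval b y u).
Proof. by elim: u => /= [i|j||u Uu v Uv|u Uu]; [| | |apply: UM|apply: UV]. Qed.

Lemma touched_coset u z p : In p (touched b y u z) -> exists2 g, inU g & p = gmul z g.
Proof.
elim: u z => [i|j||u IHu v IHv|u IHu] z.
- by move=> [<-|[]]; exists gone; rewrite ?gmul1r.
- by move=> [<-|[]]; exists gone; rewrite ?gmul1r.
- by [].
- move/(@in_app_or _ (touched b y u z)) => [/IHu //|/IHv [g Ug ->]].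
  by exists (gmul (weval b y u) g); [exact: UM (inU_weval u) Ug | rewrite gmulA].
- case/IHu => g Ug ->; exists (gmul (ginv (weval b y u)) g).
    exact: UM (UV (inU_weval u)) Ug.
  by rewrite gmulA.
Qed.

Lemma touched_inU u z p : In p (touched b y u z) -> (inU p <-> inU z).
Proof.
case/touched_coset => g Ug ->; split => [/UM /(_ (UV Ug))|/UM /(_ Ug)] //.
by rewrite gmulK.
Qed.

Definition index_of (z : K) : nat :=
  if excluded_middle_informative (inU z) is left h
  then proj1_sig (constructive_indefinite_description _ h) else 0.

Lemma index_ofP z : inU z -> pt (index_of z) = z.
Proof.
rewrite /index_of; case: excluded_middle_informative => // h _.
exact: proj2_sig (constructive_indefinite_description _ h).
Qed.

(* [f N] is the value at [pt N]; a point of [U] uses the value of one chosen index. *)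
Definition assign (f : nat -> 'I_n -> H) (j : 'I_n) (z : K) : H :=
  if excluded_middle_informative (inU z) then f (index_of z) j else gone.

Lemma assignE f j z : inU z -> assign f j z = f (index_of z) j.
Proof. by rewrite /assign; case: (excluded_middle_informative (inU z)). Qed.

Lemma assign_out f j z : ~ inU z -> assign f j z = gone.
Proof. by rewrite /assign; case: (excluded_middle_informative (inU z)). Qed.

Lemma hpart_outside f u z : ~ inU z -> hpart b y F (assign f) u z = gone.
Proof.
move=> zU; rewrite -(@hpart_one H _ _ _ b y u z); apply: hpart_local => p /touched_inU pU.
by split => [i|j]; rewrite (F_out, assign_out) // => /pU.
Qed.

Definition solved_below L (f : nat -> 'I_n -> H) := forall z u, In u w ->
  (forall p, In p (touched b y u z) -> index_of p < L) -> hpart b y F (assign f) u z = gone.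

Lemma solved_below_sat L : exists f, solved_below L f.
Proof.
set Z := map pt (List.seq 0 L).
have [M sepZ] := separating_level Z.
have [Phi sol] := @y_good M (fun i => trunc_factor M Z (F i)).
exists (fun N j => Phi j (trunc M (pt N))) => z u wu small.
case: (classic (inU z)) => [zU|]; last exact: hpart_outside.
have := sol u wu; rewrite weval_wreath => -[sol_H _].
have sol_z := f_equal (fun h => h (trunc M z)) sol_H.
rewrite -(hpart_transfer (trunc_hom M) (F' := fun i => trunc_factor M Z (F i)) (Phi' := Phi)).
  exact: sol_z.
move=> p p_in.
have pU : inU p by apply/(touched_inU p_in).
have Zp : In p Z.
  rewrite -(index_ofP pU); apply: in_map; apply/in_seq.
  by split; [apply/leP | apply/ltP; exact: small].
split => [i|j]; first exact: trunc_factorE sepZ Zp.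
by rewrite assignE // index_ofP.
Qed.

Lemma assign_compactness : exists f, forall L, solved_below L f.
Proof.
apply: (@countable_compactness (fun _ => 'I_n -> H)).
- by move=> _; apply: Finite_fun (Finite_ord n) H_fin.
- move=> L f g agr solf z u wu small; rewrite -(solf z u wu small).
  apply: hpart_local => p /small lt_pL; split => // j.
  case: (classic (inU p)) => [pU|pU]; last by rewrite !assign_out.
  by rewrite !assignE // agr.
- by move=> L f solf z u wu small; apply: solf => // p /small /ltnW.
- exact: solved_below_sat.
Qed.

Lemma good_limit_solution :
  exists Phi, @sys_holds k n (wreath H K) w (fun i => (F i, b i)) (fun j => (Phi j, y j)).
Proof.
have [f solf] := assign_compactness.
exists (assign f) => u wu; rewrite weval_wreath weval_good_eq1 //; congr pair.
apply: functional_extensionality => z.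
have [L HL] := bounded_witnesses (l := touched b y u z) (P := fun p N => index_of p < N)
  (fun p _ => ex_intro _ (index_of p).+1 (ltnSn _)).
apply: solf => // p /HL [M le_ML lt_pM]; exact: leq_trans le_ML.
Qed.
End Limit.
End Levels.

Section Solution.
Variables (H G : Grp) (Q : nat -> Grp) (psi : G -> prodG Q) (k n : nat) (w : system k n).
Hypotheses (H_fin : Finite H) (Q_fin : forall i, Finite (Q i)).
Hypotheses (G_enum : enumerable G) (w_fin : in_SysFin w).

Lemma embedded_wreath_solution (a : 'I_k -> wreath H G) :
  exists x : 'I_n -> wreath H (prodG Q), sys_holds w (fun i => wr_embed psi (a i)) x.
Proof.
pose b i := psi (a i).2.
have [y y_good] := good_everywhere Q_fin b H_fin w_fin.
have [e e_surj] := enumerable_word G_enum (enumerable_ord n).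
pose pt N := if e N is Some v then weval psi y v else gone.
have inUP z : inU pt z <-> exists v, weval psi y v = z.
  split => [[N <-]|[v <-]]; last by have [N eN] := e_surj v; exists N; rewrite /pt eN.
  by rewrite /pt; case: (e N) => [v|]; [exists v | exists WOne].
have psiU g : inU pt (psi g) by apply/inUP; exists (WConst _ g).
suff [Phi sol] : exists Phi,
    @sys_holds k n (wreath H (prodG Q)) w (fun i => (extend_by_one psi (a i).1, b i))
    (fun j => (Phi j, y j)) by exists (fun j => (Phi j, y j)).
apply: (good_limit_solution (pt := pt) H_fin y_good).
- by apply/inUP; exists WOne.
- by move=> _ _ /inUP [u <-] /inUP [v <-]; apply/inUP; exists (WMul u v).
- by move=> _ /inUP [u <-]; apply/inUP; exists (WInv u).
- by move=> i; apply: psiU.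
- by move=> j; apply/inUP; exists (WVar _ j).
- by move=> i z zU; apply: extend_by_one_out => -[g psi_g]; apply: zU; rewrite -psi_g.
Qed.
End Solution.

Theorem theorem2 (H G : Grp) (k n : nat) (w : system k n) :
  finite_grp H -> finitely_generated G -> residually_finite G ->
  in_SysFin w -> solvable_over w (wreath H G).
Proof.
move=> H_fin /enumerable_fg G_enum G_rf w_fin.
have [Q [psi [Q_fin psi_hom psi_inj]]] := residually_finite_embedding G_enum G_rf.
exists (wreath H (prodG Q)), (wr_embed psi); split; first exact: wr_embed_hom.
split; first exact: wr_embed_inj.
exact: embedded_wreath_solution.
Qed.
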